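(* Let $\alpha\in(0,1)$. Assume the setting described in the context, and assume: (i) (concentration over calibration data) there exist $\varepsilon_{\mathrm{cal}},\delta_{\mathrm{cal}}\in(0,1)$ such that for every measurable $q:(\mathcal{X}\times\mathcal{Y})^{n_{\mathrm{train}}}\to\mathbb{R}$, \[\mathbb{P}\left[\left|\frac{1}{n_{\mathrm{cal}}}\sum_{i\in I_{\mathrm{cal}}}\mathbf{1}\{\widehat{s}_{\mathrm{train}}(X_i,Y_i)\le q_{\mathrm{train}}\}-P_{q,\mathrm{train}}\right|\le\varepsilon_{\mathrm{cal}}\right]\ge 1-\delta_{\mathrm{cal}};\] (ii) (concentration over test data) there exist $\varepsilon_{\mathrm{test}},\delta_{\mathrm{test}}\in(0,1)$ such that for every measurable $q:(\mathcal{X}\times\mathcal{Y})^{n_{\mathrm{train}}}\to\mathbb{R}$, \[\mathbb{P}\left[\left|P_{q,\mathrm{train}}-\frac{1}{n_{\mathrm{test}}}\sum_{i\in I_{\mathrm{test}}}\mathbf{1}\{\widehat{s}_{\mathrm{train}}(X_i,Y_i)\le q_{\mathrm{train}}\}\right|\le\varepsilon_{\mathrm{test}}\right]\ge 1-\delta_{\mathrm{test}}.\] Let $\eta=\varepsilon_{\mathrm{cal}}+\varepsilon_{\mathrm{test}}$. Then \[\mathbb{P}\left[\frac{1}{n_{\mathrm{test}}}\sum_{i\in I_{\mathrm{test}}}\mathbf{1}\{Y_i\in C_{1-\alpha}(X_i)\}\ge 1-\alpha-\eta\right]\ge 1-\delta_{\mathrm{cal}}-\delta_{\mathrm{test}}.\]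 Additionally, if $\widehat{s}_{\mathrm{train}}(X_*,Y_* )$ almost surely has a continuous distribution conditionally on the training data, then \[\mathbb{P}\left[\left|\frac{1}{n_{\mathrm{test}}}\sum_{i\in I_{\mathrm{test}}}\mathbf{1}\{Y_i\in C_{1-\alpha}(X_i)\}-(1-\alpha)\right|\le\eta\right]\ge 1-2\delta_{\mathrm{cal}}-2\delta_{\mathrm{test}}.\]
   Context: Let $\mathcal{X},\mathcal{Y}$ be measurable spaces. The sample $(X_i,Y_i)_{i=1}^n$ consists of random pairs in $\mathcal{X}\times\mathcal{Y}$, and $(X_*,Y_* )$ is an additional random pair, independent of the sample, with $(X_i,Y_i)\sim(X_*,Y_* )$ for all $i\in\{1,\dots,n\}$. Write $n=n_{\mathrm{train}}+n_{\mathrm{cal}}+n_{\mathrm{test}}$ with positive integers, $I_{\mathrm{train}}=\{1,\dots,n_{\mathrm{train}}\}$, $I_{\mathrm{cal}}=\{n_{\mathrm{train}}+1,\dots,n_{\mathrm{train}}+n_{\mathrm{cal}}\}$, $I_{\mathrm{test}}=\{n_{\mathrm{train}}+n_{\mathrm{cal}}+1,\dots,n\}$. Let $s:(\mathcal{X}\times\mathcal{Y})^{n_{\mathrm{train}}+1}\to\mathbb{R}$ be any (measurable) function and $\widehat{s}_{\mathrm{train}}(x,y)=s((X_i,Y_i)_{i\in I_{\mathrm{train}}},(x,y))$. For $\phi\in[0,1)$, $\widehat{q}_{\phi,\mathrm{cal}}=\inf\{t\in\mathbb{R}:\frac{1}{n_{\mathrm{cal}}}\sum_{i\in I_{\mathrm{cal}}}\mathbf{1}\{\widehat{s}_{\mathrm{train}}(X_i,Y_i)\le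 t\}\ge\phi\}$ and $C_\phi(x)=\{y\in\mathcal{Y}:\widehat{s}_{\mathrm{train}}(x,y)\le\widehat{q}_{\phi,\mathrm{cal}}\}$. For measurable $q:(\mathcal{X}\times\mathcal{Y})^{n_{\mathrm{train}}}\to\mathbb{R}$, $q_{\mathrm{train}}=q((X_i,Y_i)_{i\in I_{\mathrm{train}}})$ and $P_{q,\mathrm{train}}=\mathbb{P}[\widehat{s}_{\mathrm{train}}(X_*,Y_* )\le q_{\mathrm{train}}\mid (X_i,Y_i)_{i\in I_{\mathrm{train}}}]$. *)

From HB Require Import structures.
From mathcomp Require Import all_boot all_order all_algebra.
From mathcomp Require Import all_classical all_reals all_analysis.
Set Implicit Arguments. Unset Strict Implicit. Unset Printing Implicit Defensive.
Import Order.TTheory GRing.Theory Num.Theory.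
Local Open Scope classical_set_scope.
Local Open Scope ring_scope.

Section SplitConformal.
Context {R : realType} {dO dX dY : measure_display}
  {Omega : measurableType dO} {X : measurableType dX} {Y : measurableType dY}
  {ntrain ncal ntest : nat}.

Definition train_data (Ztr : 'I_ntrain -> Omega -> X * Y) (w : Omega)
  : ntrain.-tuple (X * Y) := [tuple Ztr i w | i < ntrain].

Definition shat (s : ntrain.-tuple (X * Y) -> X * Y -> R)
  (Ztr : 'I_ntrain -> Omega -> X * Y) (w : Omega) (z : X * Y) : R :=
  s (train_data Ztr w) z.

Definition emp_frac m (s : ntrain.-tuple (X * Y) -> X * Y -> R)
  (Ztr : 'I_ntrain -> Omega -> X * Y) (Z : 'I_m -> Omega -> X * Y)
  (w : Omega) (t : R) : R :=
  m%:R^-1 * \sum_(i < m) ((shat s Ztr w (Z i w) <= t)%R : bool)%:R.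

Definition qhat (phi : R) (s : ntrain.-tuple (X * Y) -> X * Y -> R)
  (Ztr : 'I_ntrain -> Omega -> X * Y) (Zcal : 'I_ncal -> Omega -> X * Y)
  (w : Omega) : R :=
  inf [set t : R | phi <= emp_frac s Ztr Zcal w t].

Definition conf_set (phi : R) (s : ntrain.-tuple (X * Y) -> X * Y -> R)
  (Ztr : 'I_ntrain -> Omega -> X * Y) (Zcal : 'I_ncal -> Omega -> X * Y)
  (w : Omega) (x : X) : set Y :=
  [set y | shat s Ztr w (x, y) <= qhat phi s Ztr Zcal w].

(* P_{q,train} = P[ s_hat_train(X_*,Y_* ) <= q_train | training data ].
   Since (X_*,Y_* ) is independent of the sample, this conditional probability
   is (a version of) the probability over (X_*,Y_* ) with the training data
   frozen at their observed value. *)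
Definition Pq_train (P : probability Omega R)
  (s : ntrain.-tuple (X * Y) -> X * Y -> R)
  (Ztr : 'I_ntrain -> Omega -> X * Y) (Zstar : Omega -> X * Y)
  (q : ntrain.-tuple (X * Y) -> R) (w : Omega) : R :=
  fine (P [set w' | s (train_data Ztr w) (Zstar w') <= q (train_data Ztr w)]).

Definition sample_indep (P : probability Omega R)
  (Ztr : 'I_ntrain -> Omega -> X * Y) (Zcal : 'I_ncal -> Omega -> X * Y)
  (Ztest : 'I_ntest -> Omega -> X * Y) (Zstar : Omega -> X * Y) : Prop :=
  forall (A : set ((ntrain.-tuple (X * Y) * ncal.-tuple (X * Y))
                   * ntest.-tuple (X * Y))) (B : set (X * Y)),
    measurable A -> measurable B ->
    let S := fun w => ((train_data Ztr w, [tuple Zcal i w | i < ncal]),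
                        [tuple Ztest i w | i < ntest]) in
    P (S @^-1` A `&` Zstar @^-1` B) = (P (S @^-1` A) * P (Zstar @^-1` B))%E.

Definition same_law (P : probability Omega R) (Z Zstar : Omega -> X * Y) : Prop :=
  forall B : set (X * Y), measurable B -> P (Z @^-1` B) = P (Zstar @^-1` B).

End SplitConformal.

From HB Require Import structures.
From mathcomp Require Import all_boot all_order all_algebra.
From mathcomp Require Import all_classical all_reals all_analysis.
From mathcomp Require Import measurable_realfun lra.
Import Order.TTheory GRing.Theory Num.Theory.
Local Open Scope classical_set_scope.
Local Open Scope ring_scope.

(* Write F_x for the CDF of the score s(x, Z_* ) with the training data frozen
   at x, q_c(x) = inf {t | c <= F_x t} for its lower c-quantile, and
   phi = 1 - alpha.  The calibration quantile qhat is the same generalized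
   inverse applied to the calibration ECDF, so qhat <= t iff
   phi <= ECDF_cal t, and the coverage is ECDF_test qhat.
   Lower bound, c = phi - eps_cal: F_x < c strictly left of q_c, so (i) at the
   countably many thresholds q_c - 1/(k+1) shows that, with probability
   1 - delta_cal, ECDF_cal < phi strictly left of q_c, i.e. q_c <= qhat; then
   (ii) at q_c gives coverage >= ECDF_test q_c >= c - eps_test.
   Upper bound, c = phi + eps_cal: (i) at q_c gives qhat <= q_c, and when the
   score has no atoms F_x (q_c x) = c, so (ii) gives coverage <= c + eps_test.
   Union bounds combine the events. *)

Section generalized_inverse.
Context {R : realType} {d} {T : porderType d}.

Definition geninv (F : R -> T) (c : T) : R := inf [set x | (c <= F x)%O].

Variables (F : R -> T) (c : T).
Hypothesis F_nd : {homo F : x y / x <= y >-> (x <= y)%O}.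
Hypothesis F_right_closed :
  forall t, (forall x, t < x -> (c <= F x)%O) -> (c <= F t)%O.
Hypotheses (exists_ge : exists t, (c <= F t)%O) (exists_lt : exists t, (F t < c)%O).

Lemma geninv_le t : (geninv F c <= t) = (c <= F t)%O.
Proof.
have [t0 Ft0c] := exists_lt.
have lbF : lbound [set x | (c <= F x)%O] t0.
  move=> x /= cFx; rewrite leNgt; apply/negP => /ltW /F_nd Fxt0.
  by have := le_lt_trans (le_trans cFx Fxt0) Ft0c; rewrite ltxx.
apply/idP/idP => [inf_le|cFt]; last by apply: ge_inf => //; exists t0.
apply: F_right_closed => x tx.
have [u cFu ux] := inf_lt exists_ge (le_lt_trans inf_le tx).
exact: le_trans cFu (F_nd _ _ (ltW ux)).
Qed.

End generalized_inverse.

Section empirical_cdf.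
Context {R : realType} {m : nat}.
Implicit Types (a : 'I_m -> R) (t : R).

Definition ecdf a t : R := m%:R^-1 * \sum_(i < m) ((a i <= t)%R : bool)%:R.

Lemma ecdf_ge0 a t : 0 <= ecdf a t.
Proof. by rewrite mulr_ge0 ?invr_ge0 ?sumr_ge0. Qed.

Lemma ecdf_nondecreasing a : {homo ecdf a : x y / x <= y}.
Proof.
move=> x y xy; rewrite ler_wpM2l ?invr_ge0 // ler_sum // => i _.
by rewrite ler_nat; case: (leP (a i) x) => // aix; rewrite (le_trans aix xy).
Qed.

Lemma ecdf_le1 a t : (0 < m)%N -> ecdf a t <= 1.
Proof.
move=> m_gt0; rewrite ler_pdivrMl ?ltr0n // mulr1.
rewrite -[X in _ <= X%:R]card_ord -sumr_const.
by apply: ler_sum => i _; rewrite lern1 leq_b1.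
Qed.

Lemma ecdf_right_closed a (c : R) t :
  (forall x, t < x -> c <= ecdf a x) -> c <= ecdf a t.
Proof.
move=> cF; pose e := \big[Order.min/1]_(i | t < a i) (a i - t).
have e_gt0 : 0 < e by apply/bigmin_gtP; split=> // i; rewrite subr_gt0.
have e_le i : t < a i -> e <= a i - t by move=> tai; exact: bigmin_le_cond.
suff -> : ecdf a t = ecdf a (t + e / 2) by apply: cF; rewrite ltrDl divr_gt0.
congr (_ * _); apply: eq_bigr => i _.
suff -> : (a i <= t + e / 2) = (a i <= t) by [].
apply/idP/idP => [|ait]; last by rewrite (le_trans ait) ?lerDl ?divr_ge0 ?ltW.
apply: contraTT; rewrite -!ltNge => tai.
rewrite -ltrBrDl (lt_le_trans _ (e_le i tai)) //.
by rewrite ltr_pdivrMr // ltr_pMr // ltr1n.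
Qed.

Lemma exists_ecdf_ge a c : (0 < m)%N -> c <= 1 -> exists t, c <= ecdf a t.
Proof.
move=> m_gt0 c_le1; exists (\big[Order.max/0]_i a i); apply: le_trans c_le1 _.
rewrite ler_pdivlMl ?ltr0n // mulr1 -[X in X%:R <= _]card_ord -sumr_const.
by apply: ler_sum => i _; rewrite le_bigmax.
Qed.

Lemma exists_ecdf_lt a c : 0 < c -> exists t, ecdf a t < c.
Proof.
move=> c_gt0; exists (\big[Order.min/0]_i a i - 1).
rewrite /ecdf big1 ?mulr0 // => i _.
suff -> : (a i <= \big[Order.min/0]_j a j - 1) = false by [].
apply/negbTE; rewrite -ltNge ltrBlDr (le_lt_trans (bigmin_le _ i a)) //.
by rewrite ltrDl.
Qed.

End empirical_cdf.

Section measure_bounds.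
Context {d} {T : measurableType d} {R : realType}.
Local Open Scope ereal_scope.

Lemma le_measure_bigcup_nondecreasing {mu : {measure set T -> \bar R}}
    {A : (set T)^nat} {b : \bar R} :
  (forall k, measurable (A k)) -> nondecreasing_seq A ->
  (forall k, mu (A k) <= b) -> mu (\bigcup_k A k) <= b.
Proof.
move=> mA ndA muAb.
have mUA : measurable (\bigcup_k A k) by exact: bigcup_measurable.
apply: cvge_to_le (nondecreasing_cvg_mu mA mUA ndA) _.
exact: nearW.
Qed.

Lemma probability_setC_le (P : probability T R) (A : set T) (b : R) :
  measurable A -> (P (~` A) <= b%:E) = ((1 - b)%:E <= P A).
Proof.
move=> mA; rewrite probability_setC // -(fineK (fin_num_measure P _ mA)).
by rewrite -EFinB !lee_fin lerBlDr addrC -lerBlDr.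
Qed.

Lemma probability_setI_ge {P : probability T R} {A B : set T} {a b : R} :
  a%:E <= P A -> (1 - b)%:E <= P B -> measurable A -> measurable B ->
  (a - b)%:E <= P (A `&` B).
Proof.
move=> + + mA mB; have PE (C : set T) : measurable C -> P C = (fine (P C))%:E.
  by move=> mC; rewrite fineK // fin_num_measure.
have PU : P A + P B - P (A `&` B) <= 1.
  rewrite -measureUfinl ?ltey_eq ?fin_num_measure //.
  exact/probability_le1/measurableU.
move: PU; rewrite (PE A) // (PE B) // (PE (A `&` B)); last exact: measurableI.
by rewrite -EFinD !lee_fin; lra.
Qed.

End measure_bounds.

Section quantile.
Context {d} {T : measurableType d} {R : realType} {P : probability T R}.
Variable V : {RV P >-> R}.
Local Open Scope ereal_scope.

Definition quantile (c : R) : R := geninv (cdf V) c%:E.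

Lemma cdf_right_closed (c : \bar R) t :
  (forall x, (t < x)%R -> c <= cdf V x) -> c <= cdf V t.
Proof.
move=> cF; apply: cvge_to_ge (@cdf_right_continuous _ _ _ _ V t) _.
by near=> x; apply: cF; near: x; exact: nbhs_right_gt.
Unshelve. all: by end_near. Qed.

Lemma exists_cdf_ge (c : R) : (c < 1)%R -> exists t, c%:E <= cdf V t.
Proof.
move=> c_lt1; apply: contrapT => /forallNP cF.
suff : 1 <= c%:E by rewrite lee_fin leNgt c_lt1.
apply: cvge_to_le (cvg_cdfy1 V) _; apply: nearW => t.
by apply/ltW; rewrite ltNge; apply/negP/cF.
Qed.

Lemma exists_cdf_lt (c : R) : (0 < c)%R -> exists t, cdf V t < c%:E.
Proof.
move=> c_gt0; apply: contrapT => /forallNP cF.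
suff : c%:E <= 0 by rewrite lee_fin leNgt c_gt0.
apply: cvge_to_ge (cvg_cdfNy0 V) _; apply: nearW => t.
by rewrite leNgt; apply/negP/cF.
Qed.

Lemma quantile_le (c t : R) : (0 < c < 1)%R ->
  (quantile c <= t)%R = (c%:E <= cdf V t).
Proof.
case/andP => c_gt0 c_lt1; apply: geninv_le.
- exact: cdf_nondecreasing.
- exact: cdf_right_closed.
- exact: exists_cdf_ge.
- exact: exists_cdf_lt.
Qed.

Lemma cdf_quantile_le (c : R) : (0 < c < 1)%R ->
  P (V @^-1` [set quantile c]) = 0 -> cdf V (quantile c) <= c%:E.
Proof.
move=> c01 no_atom; set q := quantile c.
pose A k := V @^-1` `]-oo, (q - k.+1%:R^-1)%R].
have mA k : measurable (A k) by exact: measurable_funPTI.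
have mV1 : measurable (V @^-1` [set q]) by exact: measurable_funPTI.
have mVlt : measurable (V @^-1` `]-oo, q[) by exact: measurable_funPTI.
have below : V @^-1` `]-oo, q[ = \bigcup_k A k.
  apply/seteqP; split=> [w|w [k _]]; rewrite /A /= !in_itv /=.
    move/ltr_add_invr => [k Vwk]; exists k => //=.
    by rewrite in_itv /= lerBrDr ltW.
  by move/le_lt_trans; apply; rewrite gtrBl invr_gt0.
have -> : cdf V q = P (V @^-1` `]-oo, q[) + P (V @^-1` [set q]).
  rewrite -measureU //.
    rewrite /cdf /distribution /pushforward; congr (P _).
    apply/seteqP; split=> w /=; rewrite !in_itv /=.
      by rewrite le_eqVlt => /orP[/eqP|]; [right|left].
    by case=> [/ltW|->].
  by apply/seteqP; split=> // w [] /=; rewrite in_itv /= => + Vwq; rewrite Vwq ltxx.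
rewrite no_atom adde0 below; apply: le_measure_bigcup_nondecreasing => // [k l kl|k].
  apply/subsetPset; apply: preimage_subset; apply: subset_itvl.
  by rewrite bnd_simp lerD2l lerN2 lef_pV2 ?posrE // ler_nat.
apply/ltW; rewrite ltNge -quantile_le //.
by rewrite -/q -ltNge gtrBl invr_gt0.
Qed.

End quantile.

Section measurable_real_sets.
Context {d} {T : measurableType d} {R : realType}.
Implicit Types f g : T -> R.

Lemma measurable_set_ler {f g} : measurable_fun setT f -> measurable_fun setT g ->
  measurable [set x | f x <= g x].
Proof.
move=> mf mg; have := measurable_fun_ler mf mg measurableT (Y := [set true]) I.
by rewrite setTI.
Qed.

Lemma measurable_fun_sublevel g :
  (forall a, measurable [set x | g x <= a]) -> measurable_fun setT g.
Proof.
move=> mg; apply: (measurability _ (RGenOInfty.measurableE R)) => //.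
move=> _ [_ [a ->] <-]; apply: measurableI => //.
rewrite (_ : _ @^-1` _ = ~` [set x | g x <= a]); first exact: measurableC.
by apply/seteqP; split=> x /=; rewrite in_itv /= andbT ltNge => /negP.
Qed.

Lemma measurable_set_dist_le {f g} (e : R) :
  measurable_fun setT f -> measurable_fun setT g ->
  measurable [set x | `|f x - g x| <= e].
Proof.
move=> mf mg; apply: measurable_set_ler => //.
exact: measurableT_comp (measurable_funB mf mg).
Qed.

End measurable_real_sets.

Section split_conformal.
Context {R : realType} {dO dX dY : measure_display} {Omega : measurableType dO}
  {X : measurableType dX} {Y : measurableType dY}.
Variables (P : probability Omega R) (ntrain : nat).
Variables (Ztr : 'I_ntrain -> Omega -> X * Y) (Zstar : Omega -> X * Y).
Variable s : ntrain.-tuple (X * Y) -> X * Y -> R.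
Hypothesis mZtr : forall i, measurable_fun setT (Ztr i).
Hypothesis mZstar : measurable_fun setT Zstar.
Hypothesis ms :
  measurable_fun setT (fun p : ntrain.-tuple (X * Y) * (X * Y) => s p.1 p.2).

Local Notation train := (train_data Ztr).

Lemma measurable_train_data : measurable_fun setT train.
Proof.
apply/measurable_fun_tnthP => i.
rewrite (_ : _ \o _ = Ztr i) //.
by apply/funext => w /=; rewrite tnth_mktuple.
Qed.

Lemma measurable_score x : measurable_fun setT (fun w => s x (Zstar w)).
Proof. exact: (measurableT_comp ms (measurable_fun_pair (measurable_cst x) mZstar)). Qed.

Definition score x : {RV P >-> R} := mfun_Sub (mem_set (measurable_score x)).

Lemma cdf_scoreE x t : cdf (score x) t = P [set w | s x (Zstar w) <= t].
Proof. by []. Qed.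

Lemma measurable_cdf_score (q : ntrain.-tuple (X * Y) -> R) :
  measurable_fun setT q -> measurable_fun setT (fun x => cdf (score x) (q x)).
Proof.
move=> mq; pose Zm : {mfun Omega >-> (X * Y)%type} := mfun_Sub (mem_set mZstar).
pose A := [set p : ntrain.-tuple (X * Y) * (X * Y) | s p.1 p.2 <= q p.1].
have mA : measurable A.
  exact: measurable_set_ler ms (measurableT_comp mq measurable_fst).
rewrite (_ : (fun x => _) = fun x => distribution P Zm (xsection A x)).
  exact: measurable_fun_xsection mA.
apply/funext => x; rewrite cdf_scoreE /distribution /pushforward /xsection.
by congr (P _); apply/seteqP; split=> w /=; rewrite inE.
Qed.

Lemma Pq_trainE q w :
  (Pq_train P s Ztr Zstar q w)%:E = cdf (score (train w)) (q (train w)).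
Proof.
rewrite cdf_scoreE fineK // fin_num_measure //.
exact: measurable_set_ler (measurable_score _) (measurable_cst _).
Qed.

Lemma measurable_Pq_train q : measurable_fun setT q ->
  measurable_fun setT (Pq_train P s Ztr Zstar q).
Proof.
move=> mq; apply/measurable_EFinP.
rewrite (_ : _ \o _ = (fun x => cdf (score x) (q x)) \o train).
  exact: measurableT_comp (measurable_cdf_score _ mq) measurable_train_data.
by apply/funext => w /=; rewrite Pq_trainE.
Qed.

Lemma measurable_emp_frac m (Z : 'I_m -> Omega -> X * Y) (th : Omega -> R) :
  (forall i, measurable_fun setT (Z i)) -> measurable_fun setT th ->
  measurable_fun setT (fun w => emp_frac s Ztr Z w (th w)).
Proof.
move=> mZ mth; apply: measurable_funM => //; apply: measurable_sum => i.
have mshat : measurable_fun setT (fun w => shat s Ztr w (Z i w)).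
  exact: measurableT_comp ms (measurable_fun_pair measurable_train_data (mZ i)).
rewrite (_ : (fun w => _) = \1_[set w | shat s Ztr w (Z i w) <= th w]).
  exact/measurable_indic/measurable_set_ler.
by apply/funext => w; rewrite indicE mem_setE.
Qed.

(* [emp_frac s Ztr Z w] is the [ecdf] of the scores and [qhat] its [geninv],
   both by conversion. *)
Lemma qhat_le m (Z : 'I_m -> Omega -> X * Y) phi w t :
  (0 < m)%N -> 0 < phi <= 1 ->
  (qhat phi s Ztr Z w <= t) = (phi <= emp_frac s Ztr Z w t).
Proof.
move=> m_gt0 /andP[phi_gt0 phi_le1]; apply: geninv_le.
- exact: ecdf_nondecreasing.
- exact: ecdf_right_closed.
- exact: exists_ecdf_ge.
- exact: exists_ecdf_lt.
Qed.

Lemma measurable_qhat m (Z : 'I_m -> Omega -> X * Y) phi :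
  (0 < m)%N -> 0 < phi <= 1 -> (forall i, measurable_fun setT (Z i)) ->
  measurable_fun setT (qhat phi s Ztr Z).
Proof.
move=> m_gt0 phi01 mZ; apply: measurable_fun_sublevel => a.
rewrite (_ : [set w | _] = [set w | phi <= emp_frac s Ztr Z w a]).
  by apply: measurable_set_ler => //; exact: measurable_emp_frac.
by apply/seteqP; split=> w /=; rewrite qhat_le.
Qed.

Definition score_quantile c x := quantile (score x) c.

Lemma measurable_score_quantile c : 0 < c < 1 ->
  measurable_fun setT (score_quantile c).
Proof.
move=> c01; apply: measurable_fun_sublevel => a.
rewrite (_ : [set x | _] = [set x | (c%:E <= cdf (score x) a)%E]).
  rewrite -[X in measurable X]setTI.
  by apply: emeasurable_fun_c_infty => //; exact: measurable_cdf_score.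
by apply/seteqP; split=> x /=; rewrite /score_quantile quantile_le.
Qed.

Lemma Pq_train_lt q c w : 0 < c < 1 ->
  q (train w) < score_quantile c (train w) ->
  Pq_train P s Ztr Zstar q w < c.
Proof.
by move=> c01 q_lt; rewrite -lte_fin Pq_trainE ltNge -quantile_le // -ltNge.
Qed.

Lemma Pq_train_quantile_ge c w : 0 < c < 1 ->
  c <= Pq_train P s Ztr Zstar (score_quantile c) w.
Proof. by move=> c01; rewrite -lee_fin Pq_trainE -quantile_le. Qed.

Lemma Pq_train_quantile_le c w : 0 < c < 1 ->
  (forall t, P [set w' | s (train w) (Zstar w') = t] = 0%E) ->
  Pq_train P s Ztr Zstar (score_quantile c) w <= c.
Proof.
move=> c01 no_atom; rewrite -lee_fin Pq_trainE cdf_quantile_le //.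
exact: no_atom.
Qed.

Variables (ncal ntest : nat) (Zcal : 'I_ncal -> Omega -> X * Y).
Variable Ztest : 'I_ntest -> Omega -> X * Y.
Hypotheses (ncal_gt0 : (0 < ncal)%N) (ntest_gt0 : (0 < ntest)%N).
Hypothesis mZcal : forall i, measurable_fun setT (Zcal i).
Hypothesis mZtest : forall i, measurable_fun setT (Ztest i).
Variables (eps_cal delta_cal eps_test delta_test : R).
Hypothesis cal_concentration : forall q, measurable_fun setT q ->
  ((1 - delta_cal)%:E <= P [set w | (`|emp_frac s Ztr Zcal w (q (train w))
                                      - Pq_train P s Ztr Zstar q w| <= eps_cal)%R])%E.
Hypothesis test_concentration : forall q, measurable_fun setT q ->
  ((1 - delta_test)%:E <= P [set w | (`|Pq_train P s Ztr Zstar q w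
                            - emp_frac s Ztr Ztest w (q (train w))| <= eps_test)%R])%E.

Local Notation qcal phi := (qhat phi s Ztr Zcal).

Lemma measurable_emp_frac_train m (Z : 'I_m -> Omega -> X * Y) q :
  (forall i, measurable_fun setT (Z i)) -> measurable_fun setT q ->
  measurable_fun setT (fun w => emp_frac s Ztr Z w (q (train w))).
Proof.
move=> mZ mq; apply: measurable_emp_frac => //.
exact: measurableT_comp mq measurable_train_data.
Qed.

Lemma measurable_cal_event q : measurable_fun setT q ->
  measurable [set w | `|emp_frac s Ztr Zcal w (q (train w))
                       - Pq_train P s Ztr Zstar q w| <= eps_cal].
Proof.
move=> mq; apply: measurable_set_dist_le; last exact: measurable_Pq_train.
exact: measurable_emp_frac_train.
Qed.

Lemma measurable_test_event q : measurable_fun setT q ->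
  measurable [set w | `|Pq_train P s Ztr Zstar q w
                       - emp_frac s Ztr Ztest w (q (train w))| <= eps_test].
Proof.
move=> mq; apply: measurable_set_dist_le; first exact: measurable_Pq_train.
exact: measurable_emp_frac_train.
Qed.

Lemma measurable_quantile_train c : 0 < c < 1 ->
  measurable_fun setT (fun w => score_quantile c (train w)).
Proof.
move=> c01.
exact: measurableT_comp (measurable_score_quantile _ c01) measurable_train_data.
Qed.

Lemma measurable_coverage phi : 0 < phi <= 1 ->
  measurable_fun setT (fun w => emp_frac s Ztr Ztest w (qcal phi w)).
Proof. by move=> phi01; apply: measurable_emp_frac => //; exact: measurable_qhat. Qed.

Lemma prob_quantile_le_qhat phi : 0 < eps_cal -> 0 < phi - eps_cal -> phi <= 1 ->
  ((1 - delta_cal)%:E <=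
   P [set w | (score_quantile (phi - eps_cal) (train w) <= qcal phi w)%R])%E.
Proof.
move=> eps_gt0 c_gt0 phi_le1.
have c01 : 0 < phi - eps_cal < 1 by apply/andP; split; lra.
have phi01 : 0 < phi <= 1 by apply/andP; split; lra.
pose q k x := score_quantile (phi - eps_cal) x - k.+1%:R^-1.
have mq k : measurable_fun setT (q k).
  by apply: measurable_funB => //; exact: measurable_score_quantile.
pose A k := [set w | phi <= emp_frac s Ztr Zcal w (q k (train w))].
have mA k : measurable (A k).
  by apply: measurable_set_ler => //; exact: measurable_emp_frac_train.
have ndA : nondecreasing_seq A.
  move=> k l kl; apply/subsetPset => w /le_trans; apply; apply: ecdf_nondecreasing.
  by rewrite lerD2l lerN2 lef_pV2 ?posrE // ler_nat.
have PA k : (P (A k) <= delta_cal%:E)%E.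
  have := cal_concentration _ (mq k).
  rewrite -probability_setC_le; last exact: measurable_cal_event.
  apply: le_trans; apply: le_measure; rewrite ?inE //.
    exact/measurableC/measurable_cal_event.
  move=> w; rewrite /A /= ler_distlC => phi_le /andP[Pq_ge _].
  have := Pq_train_lt (q k) _ w c01; rewrite ltrBlDr ltrDl invr_gt0 ltr0n.
  by move=> /(_ isT); lra.
have mE := measurable_set_ler (measurable_quantile_train _ c01)
  (measurable_qhat _ _ _ ncal_gt0 phi01 mZcal).
rewrite -probability_setC_le //.
apply: le_trans (le_measure_bigcup_nondecreasing mA ndA PA).
apply: le_measure; rewrite ?inE; [exact: measurableC|exact: bigcup_measurable|].
move=> w /= /negP; rewrite -ltNge => /ltr_add_invr[k qk_lt]; exists k => //.
by rewrite /A /= -qhat_le // /q lerBrDr ltW.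
Qed.

Lemma prob_qhat_le_quantile phi : 0 < phi -> 0 < eps_cal -> phi + eps_cal < 1 ->
  ((1 - delta_cal)%:E <=
   P [set w | (qcal phi w <= score_quantile (phi + eps_cal) (train w))%R])%E.
Proof.
move=> phi_gt0 eps_gt0 c_lt1.
have c01 : 0 < phi + eps_cal < 1 by apply/andP; split; lra.
have phi01 : 0 < phi <= 1 by apply/andP; split; lra.
have mq := measurable_score_quantile _ c01.
have mE := measurable_set_ler (measurable_qhat _ _ _ ncal_gt0 phi01 mZcal)
  (measurable_quantile_train _ c01).
apply: le_trans (cal_concentration _ mq) _; apply: le_measure; rewrite ?inE //.
  exact: measurable_cal_event.
move=> w; rewrite /= ler_distlC => /andP[_ Pq_le]; rewrite qhat_le //.
by have := Pq_train_quantile_ge _ w c01; lra.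
Qed.

Lemma prob_coverage_ge phi : 0 < phi <= 1 -> 0 < eps_cal -> 0 <= eps_test ->
  0 <= delta_cal -> 0 <= delta_test ->
  ((1 - delta_cal - delta_test)%:E <=
   P [set w | (phi - (eps_cal + eps_test) <= emp_frac s Ztr Ztest w (qcal phi w))%R])%E.
Proof.
move=> phi01 eps_gt0 epst_ge0 dc_ge0 dt_ge0; have /andP[phi_gt0 phi_le1] := phi01.
have [c_le0|c_gt0] := leP (phi - eps_cal) 0.
  rewrite (_ : [set w | _] = setT) ?probability_setT ?lee_fin; first lra.
  apply/seteqP; split=> // w _ /=.
  have : 0 <= emp_frac s Ztr Ztest w (qcal phi w) := ecdf_ge0 _ _.
  lra.
have c01 : 0 < phi - eps_cal < 1 by apply/andP; split; lra.
have mq := measurable_score_quantile _ c01.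
have mE_cal := measurable_set_ler (measurable_quantile_train _ c01)
  (measurable_qhat _ _ _ ncal_gt0 phi01 mZcal).
have mE_test := measurable_test_event _ mq.
have := probability_setI_ge (prob_quantile_le_qhat _ eps_gt0 c_gt0 phi_le1)
  (test_concentration _ mq) mE_cal mE_test.
move=> /le_trans; apply; apply: le_measure; rewrite ?inE.
- exact: measurableI.
- by apply: measurable_set_ler => //; exact: measurable_coverage.
move=> w [/= q_le]; rewrite ler_distlC => /andP[emp_ge _].
have := Pq_train_quantile_ge _ w c01.
have : emp_frac s Ztr Ztest w (score_quantile (phi - eps_cal) (train w))
       <= emp_frac s Ztr Ztest w (qcal phi w) := ecdf_nondecreasing _ _ _ q_le.
lra.
Qed.

Lemma prob_coverage_le phi : 0 < phi <= 1 -> 0 < eps_cal -> 0 <= eps_test ->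
  0 <= delta_cal -> 0 <= delta_test ->
  {ae P, forall w, forall t, P [set w' | s (train w) (Zstar w') = t] = 0%E} ->
  ((1 - delta_cal - delta_test)%:E <=
   P [set w | (emp_frac s Ztr Ztest w (qcal phi w) <= phi + (eps_cal + eps_test))%R])%E.
Proof.
move=> phi01 eps_gt0 epst_ge0 dc_ge0 dt_ge0 [N [mN PN0 atomsN]].
have /andP[phi_gt0 phi_le1] := phi01.
have [c_ge1|c_lt1] := leP 1 (phi + eps_cal).
  rewrite (_ : [set w | _] = setT) ?probability_setT ?lee_fin; first lra.
  apply/seteqP; split=> // w _ /=.
  have : emp_frac s Ztr Ztest w (qcal phi w) <= 1 := ecdf_le1 _ _ ntest_gt0.
  lra.
have c01 : 0 < phi + eps_cal < 1 by apply/andP; split; lra.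
have mq := measurable_score_quantile _ c01.
have mE_cal := measurable_set_ler (measurable_qhat _ _ _ ncal_gt0 phi01 mZcal)
  (measurable_quantile_train _ c01).
have mE_test := measurable_test_event _ mq.
have PNc : ((1 - 0)%:E <= P (~` N))%E.
  by rewrite probability_setC // PN0 subr0 sube0.
have := probability_setI_ge (probability_setI_ge
  (prob_qhat_le_quantile _ phi_gt0 eps_gt0 c_lt1) (test_concentration _ mq)
  mE_cal mE_test) PNc (measurableI _ _ mE_cal mE_test) (measurableC mN).
rewrite subr0 => /le_trans; apply; apply: le_measure; rewrite ?inE.
- exact: measurableI (measurableI _ _ mE_cal mE_test) (measurableC mN).
- by apply: measurable_set_ler => //; exact: measurable_coverage.
move=> w [[/= qhat_le]]; rewrite ler_distlC => /andP[_ emp_le] Nw.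
have atomless : forall t, P [set w' | s (train w) (Zstar w') = t] = 0%E.
  by apply: contrapT => /atomsN; exact: Nw.
have := Pq_train_quantile_le _ w c01 atomless.
have : emp_frac s Ztr Ztest w (qcal phi w)
       <= emp_frac s Ztr Ztest w (score_quantile (phi + eps_cal) (train w)).
  exact: ecdf_nondecreasing.
lra.
Qed.

Lemma prob_coverage_dist phi : 0 < phi <= 1 -> 0 < eps_cal -> 0 <= eps_test ->
  0 <= delta_cal -> 0 <= delta_test ->
  {ae P, forall w, forall t, P [set w' | s (train w) (Zstar w') = t] = 0%E} ->
  ((1 - 2 * delta_cal - 2 * delta_test)%:E <=
   P [set w | (`|emp_frac s Ztr Ztest w (qcal phi w) - phi| <= eps_cal + eps_test)%R])%E.
Proof.
move=> phi01 eps_gt0 epst_ge0 dc_ge0 dt_ge0 atoms.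
have mcov := measurable_coverage _ phi01.
have lower := prob_coverage_ge _ phi01 eps_gt0 epst_ge0 dc_ge0 dt_ge0.
have := prob_coverage_le _ phi01 eps_gt0 epst_ge0 dc_ge0 dt_ge0 atoms.
rewrite -addrA -opprD => upper.
have mlower := measurable_set_ler (measurable_cst (phi - (eps_cal + eps_test))) mcov.
have mupper := measurable_set_ler mcov (measurable_cst (phi + (eps_cal + eps_test))).
apply: le_trans (le_trans _ (probability_setI_ge lower upper mlower mupper)) _.
  by rewrite lee_fin; lra.
apply: le_measure; rewrite ?inE.
- exact: measurableI.
- exact: measurable_set_dist_le.
by move=> w [/= lo up]; rewrite ler_distl lo up.
Qed.

Lemma in_conf_set phi w x y :
  (y \in conf_set phi s Ztr Zcal w x) = (shat s Ztr w (x, y) <= qcal phi w).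
Proof. by apply/idP/idP => [/set_mem|le_q]; [|apply/mem_set]. Qed.

Lemma coverage_emp_frac phi w :
  ntest%:R^-1 * \sum_(i < ntest)
    (((Ztest i w).2 \in conf_set phi s Ztr Zcal w (Ztest i w).1) : bool)%:R =
  emp_frac s Ztr Ztest w (qcal phi w).
Proof.
by congr (_ * _); apply: eq_bigr => i _; rewrite in_conf_set -surjective_pairing.
Qed.

End split_conformal.

Theorem theorem2p2 (R : realType) (dO dX dY : measure_display)
  (Omega : measurableType dO) (X : measurableType dX) (Y : measurableType dY)
  (P : probability Omega R) (ntrain ncal ntest : nat)
  (Ztr : 'I_ntrain -> Omega -> X * Y) (Zcal : 'I_ncal -> Omega -> X * Y)
  (Ztest : 'I_ntest -> Omega -> X * Y) (Zstar : Omega -> X * Y)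
  (s : ntrain.-tuple (X * Y) -> X * Y -> R)
  (alpha eps_cal delta_cal eps_test delta_test : R) :
  (0 < ntrain)%N -> (0 < ncal)%N -> (0 < ntest)%N ->
  (forall i, measurable_fun setT (Ztr i)) ->
  (forall i, measurable_fun setT (Zcal i)) ->
  (forall i, measurable_fun setT (Ztest i)) ->
  measurable_fun setT Zstar ->
  (forall i, same_law P (Ztr i) Zstar) ->
  (forall i, same_law P (Zcal i) Zstar) ->
  (forall i, same_law P (Ztest i) Zstar) ->
  sample_indep P Ztr Zcal Ztest Zstar ->
  measurable_fun setT (fun p : ntrain.-tuple (X * Y) * (X * Y) => s p.1 p.2) ->
  0 < alpha < 1 ->
  0 < eps_cal < 1 -> 0 < delta_cal < 1 ->
  0 < eps_test < 1 -> 0 < delta_test < 1 ->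
  (* (i) concentration over calibration data *)
  (forall q : ntrain.-tuple (X * Y) -> R, measurable_fun setT q ->
     (P [set w | (`| emp_frac s Ztr Zcal w (q (train_data Ztr w))
                    - Pq_train P s Ztr Zstar q w | <= eps_cal)%R]
      >= (1 - delta_cal)%R%:E)%E) ->
  (* (ii) concentration over test data *)
  (forall q : ntrain.-tuple (X * Y) -> R, measurable_fun setT q ->
     (P [set w | (`| Pq_train P s Ztr Zstar q w
                    - emp_frac s Ztr Ztest w (q (train_data Ztr w)) | <= eps_test)%R]
      >= (1 - delta_test)%R%:E)%E) ->
  let eta := eps_cal + eps_test in
  let coverage := fun w : Omega =>
    ntest%:R^-1 * \sum_(i < ntest)
      (((Ztest i w).2 \in conf_set (1 - alpha) s Ztr Zcal w (Ztest i w).1) : bool)%:R in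
  (P [set w | (coverage w >= 1 - alpha - eta)%R] >= (1 - delta_cal - delta_test)%R%:E)%E
  /\
  ({ae P, forall w, forall t : R,
      P [set w' | s (train_data Ztr w) (Zstar w') = t] = 0%E} ->
   (P [set w | (`| coverage w - (1 - alpha) | <= eta)%R]
    >= (1 - 2 * delta_cal - 2 * delta_test)%R%:E)%E).
Proof.
move=> _ ncal_gt0 ntest_gt0 mZtr mZcal mZtest mZstar _ _ _ _ ms
  /andP[alpha_gt0 alpha_lt1] /andP[eps_cal_gt0 _] /andP[delta_cal_gt0 _]
  /andP[eps_test_gt0 _] /andP[delta_test_gt0 _] cal_conc test_conc eta coverage.
(* The i.i.d. and independence hypotheses act only through (i) and (ii). *)
have phi01 : 0 < 1 - alpha <= 1 by apply/andP; split; lra.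
have -> : coverage = fun w => emp_frac s Ztr Ztest w (qhat (1 - alpha) s Ztr Zcal w).
  by apply/funext => w; exact: coverage_emp_frac.
split=> [|atoms].
  by apply: (prob_coverage_ge _ _ _ _ _ mZtr mZstar ms) => //; exact: ltW.
by apply: (prob_coverage_dist _ _ _ _ _ mZtr mZstar ms) => //; exact: ltW.
Qed.
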